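(* Let $\mathcal S$ be a Stone pseudovariety and $S$ a Stone topological algebra which is residually $\mathcal S$. If $K$ is a clopen subset of $S$, then there exist $T\in\mathcal S$ and a continuous homomorphism $\varphi:S\to T$ such that $\varphi^{-1}(\varphi(K))=K$.
   Context: All algebras are topological $\Omega$-algebras over a fixed topological signature $\Omega=\biguplus_n\Omega_n$ (continuous evaluation maps $\Omega_n\times A^n\to A$). A Stone topological algebra is one whose space is compact Hausdorff and 0-dimensional. A Stone pseudovariety is a nonempty class of Stone topological algebras closed under images by onto continuous homomorphisms that are Stone topological algebras, closed subalgebras, and finite direct products. $S$ is residually $\mathcal S$ if any two distinct elements of $S$ are separated by a continuous homomorphism into a member of $\mathcal S$. *)

From HB Require Import structures.
From mathcomp Require Import all_boot all_order all_algebra.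
From mathcomp Require Import all_classical all_reals all_analysis.
Set Implicit Arguments. Unset Strict Implicit. Unset Printing Implicit Defensive.
Local Open Scope classical_set_scope.

(* A topological signature: Omega = disjoint union of the Omega_n, each a
   topological space.  We represent it by the family [Om : nat -> topologicalType]. *)

Record alg (Om : nat -> topologicalType) := Alg {
  carrier :> topologicalType;
  op : forall n, Om n -> ('I_n -> carrier) -> carrier }.

Definition top_alg Om (A : alg Om) : Prop :=
  forall n, continuous (fun p : Om n * {ptws 'I_n -> A} => @op Om A n p.1 p.2).

Definition zero_dim (T : topologicalType) : Prop :=
  forall (x : T) (U : set T), open U -> U x ->
    exists V : set T, [/\ clopen V, V x & V `<=` U].

Definition stone Om (A : alg Om) : Prop :=
  [/\ top_alg A, compact [set: A], hausdorff_space A & zero_dim A].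

Definition is_hom Om (A B : alg Om) (f : A -> B) : Prop :=
  forall n (w : Om n) (a : 'I_n -> A), f (@op Om A n w a) = @op Om B n w (f \o a).

Definition cont_hom Om (A B : alg Om) (f : A -> B) : Prop :=
  is_hom f /\ continuous f.

Definition subalg_closed Om (A : alg Om) (B : set A) : Prop :=
  forall n (w : Om n) (a : 'I_n -> A), (forall i, B (a i)) -> B (@op Om A n w a).

Definition sub_alg Om (A : alg Om) (B : set A) (HB : subalg_closed B) : alg Om :=
  @Alg Om (set_type B)
    (fun n w a => exist _ (@op Om A n w (fun i => set_val (a i)))
       (mem_set (HB n w _ (fun i => set_valP (a i))))).

Definition prod_alg Om (I : finType) (A : I -> alg Om) : alg Om :=
  @Alg Om (prod_topology (fun i => carrier (A i)))
    (fun n w a => (fun i => @op Om (A i) n w (fun k => a k i)) : forall i, A i).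

Definition stone_pseudovariety Om (V : alg Om -> Prop) : Prop :=
  [/\ (forall A, V A -> stone A),
      (exists A, V A),
      (forall (A B : alg Om) (f : A -> B),
          V A -> stone B -> cont_hom f -> (forall y : B, exists x : A, f x = y) -> V B),
      (forall (A : alg Om) (B : set A) (HB : subalg_closed B),
          V A -> closed B -> V (sub_alg HB))
    & (forall (I : finType) (A : I -> alg Om),
          (forall i, V (A i)) -> V (prod_alg A))].

Definition residually Om (V : alg Om -> Prop) (S : alg Om) : Prop :=
  forall x y : S, x <> y ->
    exists (T : alg Om) (f : S -> T), [/\ V T, cont_hom f & f x <> f y].

From mathcomp Require Import all_boot all_order all_algebra.
From mathcomp Require Import all_classical all_reals all_analysis.
Set Implicit Arguments. Unset Strict Implicit. Unset Printing Implicit Defensive.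
Local Open Scope classical_set_scope.

(* Continuous homomorphisms into members of V can be combined by finite
   products, so their kernels form a downward directed family. If y lies
   outside a compact set C, residual separation gives for each x in C one such
   homomorphism separating x from y, and it still separates a neighbourhood of
   x from y; compactness then yields a single one separating all of C from y.
   Running the same argument on the compact set ~K, where now each point y
   must be kept away from the image of K (closed, being compact in a
   Hausdorff space), gives phi with phi z outside phi(K) whenever z is
   outside K. *)

Lemma continuous_tuple (I : choiceType) (T : topologicalType)
    (U : I -> topologicalType) (f : forall i, T -> U i) :
  (forall i, continuous (f i)) ->
  continuous ((fun x i => f i x) : T -> prod_topology U).
Proof.
move=> cf x; apply/cvg_sup => i.
by apply: (@continuous_comp_initial _ _ _ (@^~ i)) x; exact: cf.
Qed.

Lemma near_notin_closed (T U : topologicalType) (f : T -> U) (B : set U) x :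
  continuous f -> closed B -> ~ B (f x) -> \forall x' \near x, ~ B (f x').
Proof.
move=> cf cB nBfx; apply: (cf x (~` B)); apply: open_nbhs_nbhs; split => //.
exact: closed_openC.
Qed.

Lemma cont_hom_tuple Om (S : alg Om) (I : finType) (A : I -> alg Om)
    (f : forall i, S -> A i) :
  (forall i, cont_hom (f i)) ->
  cont_hom ((fun z i => f i z) : S -> prod_alg A).
Proof.
move=> hf; split; last by apply: continuous_tuple => i; case: (hf i).
move=> n w a; apply: functional_extensionality_dep => i /=.
by case: (hf i) => + _; apply.
Qed.

Section ResiduallyStone.
Variables (Om : nat -> topologicalType) (V : alg Om -> Prop) (S : alg Om).
Hypothesis pvV : stone_pseudovariety V.

Record vhom := VHom {
  vhom_cod : alg Om;
  vhom_map :> S -> vhom_cod;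
  vhom_codV : V vhom_cod;
  vhom_mapP : cont_hom vhom_map }.

Definition vker (p : vhom) : set (S * S) := [set zw | p zw.1 = p zw.2].

Lemma vhom_prod (I : finType) (F : I -> vhom) :
  exists p, forall i, vker p `<=` vker (F i).
Proof.
case: pvV => _ _ _ _ prodV.
exists (VHom (prodV _ _ (fun i => vhom_codV (F i)))
             (cont_hom_tuple (fun i => vhom_mapP (F i)))).
by move=> i [z w] /= /(congr1 (@^~ i)).
Qed.

Lemma vhom_continuous (p : vhom) : continuous p.
Proof. by case: (vhom_mapP p). Qed.

Lemma vhom_cod_hausdorff (p : vhom) : hausdorff_space (vhom_cod p).
Proof. by case: pvV => stoneV _ _ _ _; case: (stoneV _ (vhom_codV p)). Qed.

(* Indexed by kernels rather than by [vhom], whose universe is too large for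
   [compact_near_coveringP]. *)
Definition vker_filter : set_system (set (S * S)) :=
  filter_from [set E | exists p, vker p = E] (fun E => [set E' | E' `<=` E]).

Lemma vker_filter_filter : Filter vker_filter.
Proof.
apply: filter_from_filter.
  by have [p _] := vhom_prod (fun v : void => match v with end); exists (vker p), p.
move=> _ _ [q <-] [r <-].
have [p pqr] := vhom_prod (fun b : bool => if b then q else r).
exists (vker p); first by exists p.
by move=> E /= Ep; split; [exact: subset_trans Ep (pqr true)
                            | exact: subset_trans Ep (pqr false)].
Qed.

Lemma vker_near_covering (C : set S) (R : S -> set (S * S) -> Prop) :
  compact C -> (forall z E E', E `<=` E' -> R z E' -> R z E) ->
  (forall x, C x -> exists q, \forall z \near x, R z (vker q)) ->
  exists p, forall z, C z -> R z (vker p).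
Proof.
move=> cC antiR locR.
have [_ [p <-] pC] : vker_filter [set E | forall z, C z -> R z E].
  apply: (compact_near_coveringP C).1 vker_filter_filter _ => // x /locR [q Rq].
  exists ([set z | R z (vker q)], [set E | E `<=` vker q]).
    by split=> //; exists (vker q) => //; exists q.
  by case=> z E [/= Rzq Eq]; exact: antiR Eq Rzq.
by exists p; apply: pC.
Qed.

Hypothesis resS : residually V S.

Lemma residually_separate_compact (C : set S) y :
  compact C -> ~ C y -> exists p : vhom, forall z, C z -> p z <> p y.
Proof.
move=> cC nCy; apply: (vker_near_covering (R := fun z E => ~ E (z, y))) => //.
  by move=> z E E' EE' + /EE'.
move=> x Cx; have /resS [T [f [VT fP fxy]]] : x <> y.
  by move=> exy; apply: nCy; rewrite -exy.
exists (VHom VT fP); apply: (@near_notin_closed _ _ f [set f y]) => //.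
  by case: fP.
apply: accessible_closed_set1; apply: hausdorff_accessible.
exact: (@vhom_cod_hausdorff (VHom VT fP)).
Qed.

Lemma residually_saturate_clopen (K : set S) :
  compact [set: S] -> clopen K ->
  exists p : vhom, forall z, ~ K z -> forall k, K k -> p z <> p k.
Proof.
move=> cS [oK cK].
have cKC : compact (~` K) by apply: subclosed_compact cS _ => //; rewrite closedC.
have {}cK : compact K by exact: subclosed_compact cS _.
apply: (vker_near_covering (R := fun z E => forall k, K k -> ~ E (z, k))) cKC _ _.
  by move=> z E E' EE' RE' k /RE' + /EE'.
move=> y nKy; have [q qK] := residually_separate_compact cK nKy.
exists q; near=> z => k Kk qzk.
suff : ~ (q @` K) (q z) by apply; exists k.
near: z; apply: near_notin_closed; first exact: vhom_continuous.
- apply: compact_closed; first exact: vhom_cod_hausdorff.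
  apply: continuous_compact => //; exact/continuous_subspaceT/vhom_continuous.
- by case=> k Kk; exact: qK.
Unshelve. all: end_near.
Qed.

End ResiduallyStone.

Theorem lemma4p9 (Om : nat -> topologicalType) (V : alg Om -> Prop) (S : alg Om)
  (K : set S) :
  stone_pseudovariety V -> stone S -> residually V S -> clopen K ->
  exists (T : alg Om) (phi : S -> T),
    [/\ V T, cont_hom phi & phi @^-1` (phi @` K) = K].
Proof.
move=> pvV [_ cS _ _] resS clK.
have [p pK] := residually_saturate_clopen pvV resS cS clK.
exists (vhom_cod p), p; split; [exact: vhom_codV | exact: vhom_mapP |].
apply/seteqP; split=> [z [k Kk pkz] | z Kz]; last by exists z.
by apply: contrapT => nKz; exact: pK nKz k Kk (esym pkz).
Qed.
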